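(* Let $m,n\ge 2$ and let $\mathcal{C}$ be a Cauchy tensor of order $m$ and dimension $n$ with generating vector $c\in\mathbb{R}^n$ all of whose entries are nonnegative. Then every H-eigenvalue of $\mathcal{C}$ is nonnegative.
   Context: The Cauchy tensor with generating vector $c=(c_1,\dots,c_n)^T$ (with $c_{i_1}+\cdots+c_{i_m}\neq0$ for all indices) is $\mathcal{C}=(c_{i_1\cdots i_m})$, $c_{i_1\cdots i_m}=\frac{1}{c_{i_1}+\cdots+c_{i_m}}$, $i_j\in\{1,\dots,n\}$; it is symmetric. For $x\in\mathbb{R}^n$, $\mathcal{C}x^{m-1}\in\mathbb{R}^n$ has $i$-th component $\sum_{i_2,\dots,i_m}c_{ii_2\cdots i_m}x_{i_2}\cdots x_{i_m}$. A real number $\lambda$ is an H-eigenvalue of $\mathcal{C}$ if there is $x\in\mathbb{R}^n\setminus\{0\}$ with $\mathcal{C}x^{m-1}=\lambda x^{[m-1]}$, where $x^{[m-1]}=(x_1^{m-1},\dots,x_n^{m-1})^T$. *)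

From HB Require Import structures.
From mathcomp Require Import all_boot all_order all_algebra.
Set Implicit Arguments. Unset Strict Implicit. Unset Printing Implicit Defensive.
Import Order.TTheory GRing.Theory Num.Theory.
Local Open Scope ring_scope.

(* A tensor of order m and dimension n is given by its entries
   A (i_1 :: ... :: i_m); it is only ever evaluated on index lists of length m. *)

Definition cauchy_tensor (R : fieldType) (n : nat) (c : 'I_n -> R)
  (s : seq 'I_n) : R := (\sum_(j <- s) c j)^-1.

Definition tensor_apply (R : nzRingType) (m n : nat) (A : seq 'I_n -> R)
  (x : 'cV[R]_n) (i : 'I_n) : R :=
  \sum_(t : (m.-1).-tuple 'I_n) A (i :: tval t) * \prod_(j <- tval t) x j 0.

Definition H_eigenvalue (R : nzRingType) (m n : nat) (A : seq 'I_n -> R)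
  (lam : R) : Prop :=
  exists x : 'cV[R]_n, x != 0 /\
    forall i : 'I_n, tensor_apply m A x i = lam * (x i 0) ^+ (m.-1).

From HB Require Import structures.
From mathcomp Require Import all_boot all_order all_algebra.
From mathcomp Require Import ring lra.
Set Implicit Arguments. Unset Strict Implicit. Unset Printing Implicit Defensive.
Import Order.TTheory GRing.Theory Num.Theory.
Local Open Scope ring_scope.

(* A Cauchy matrix [1/(a_p + a_q)] with all a_p > 0 is positive semidefinite
   (one step of Gaussian elimination preserves the Cauchy shape).  Splitting an
   index tuple of even length 2h into two halves of length h, the sum
   sum_t x_t / (d + c_t) over such tuples is the quadratic form of the Cauchy
   matrix with parameters d/2 + c_s and weights x_s, s ranging over h-tuples,
   hence nonnegative.  For odd m = 2h+1 this is the i-th coordinate of C x^{m-1}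
   at an i with x_i != 0, which equals lam x_i^{2h}; for even m = 2h it is
   x^T C x^{m-1} = lam sum_i x_i^{2h}. *)

Section TupleSums.
Variables (V : nmodType) (T : finType).

Lemma sum_tuple_cons (k : nat) (F : seq T -> V) :
  \sum_(t : k.+1.-tuple T) F t = \sum_(i : T) \sum_(t : k.-tuple T) F (i :: t).
Proof.
rewrite pair_big /=.
rewrite (reindex (fun p : T * k.-tuple T => [tuple of p.1 :: p.2])) //=.
exists (fun t : k.+1.-tuple T => (thead t, [tuple of behead t])).
  by move=> [i t] _ /=; rewrite theadE; congr pair; apply: val_inj.
by move=> t _ /=; rewrite -tuple_eta.
Qed.

Lemma sum_tuple_cat (a b : nat) (F : seq T -> V) :
  \sum_(t : (a + b).-tuple T) F t =
  \sum_(s : a.-tuple T) \sum_(u : b.-tuple T) F (s ++ u).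
Proof.
elim: a F => [|a IH] F.
  by rewrite (big_pred1 [tuple]) // => s; apply/esym/eqP; apply: tuple0.
transitivity (\sum_(t : (a + b).+1.-tuple T) F t); first by [].
rewrite sum_tuple_cons (sum_tuple_cons a (fun s => \sum_(u : b.-tuple T) F (s ++ u))).
by apply: eq_bigr => i _; apply: (IH (fun s => F (i :: s))).
Qed.

End TupleSums.

Section CauchyForm.
Variable R : realFieldType.

Definition cauchy_form (l : seq (R * R)) : R :=
  \sum_(p <- l) \sum_(q <- l) p.2 * q.2 / (p.1 + q.1).

Definition cauchy_pivot (a : R) (q : R * R) : R * R :=
  (q.1, q.2 * (q.1 - a) / (q.1 + a)).

Lemma cauchy_form_cons (a w : R) (l : seq (R * R)) :
  0 < a -> all (fun p : R * R => 0 < p.1) l ->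
  let S := \sum_(q <- l) q.2 / (a + q.1) in
  cauchy_form ((a, w) :: l) =
    (w + 2 * a * S) ^+ 2 / (2 * a) + cauchy_form (map (cauchy_pivot a) l).
Proof.
move=> a_gt0 l_gt0 S.
have pivotE p q : p \in l -> q \in l ->
    (cauchy_pivot a p).2 * (cauchy_pivot a q).2
      / ((cauchy_pivot a p).1 + (cauchy_pivot a q).1) =
    p.2 * q.2 / (p.1 + q.1) - 2 * a * (p.2 / (a + p.1)) * (q.2 / (a + q.1)).
  move=> /(allP l_gt0) p_gt0 /(allP l_gt0) q_gt0.
  by rewrite /cauchy_pivot /=; field; rewrite !gt_eqF //; lra.
rewrite /cauchy_form big_cons big_map.
under eq_bigr => p _ do rewrite big_cons.
rewrite big_cons /= big_split /=.
under [X in _ = _ + X]eq_big_seq => p lp.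
  rewrite big_map.
  under eq_big_seq => q lq do rewrite pivotE //.
  rewrite sumrB -mulr_sumr.
  over.
rewrite sumrB -mulr_suml -/S.
have wS1 : \sum_(q <- l) w * q.2 / (a + q.1) = w * S.
  by rewrite /S mulr_sumr; apply: eq_bigr => q _; rewrite mulrA.
have wS2 : \sum_(p <- l) p.2 * w / (p.1 + a) = w * S.
  by rewrite /S mulr_sumr; apply: eq_bigr => p _; rewrite (addrC p.1) mulrAC mulrC.
rewrite wS1 wS2 -mulr_sumr -/S.
by field; rewrite gt_eqF //; lra.
Qed.

Lemma cauchy_form_ge0 (l : seq (R * R)) :
  all (fun p : R * R => 0 < p.1) l -> 0 <= cauchy_form l.
Proof.
move: {2}(size l) (erefl (size l)) => k.
elim: k l => [|k IH] [|[a w] l] //=; try by rewrite /cauchy_form big_nil.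
move=> [size_l] /andP[a_gt0 l_gt0].
rewrite (cauchy_form_cons w a_gt0 l_gt0) addr_ge0 //.
  by rewrite divr_ge0 ?sqr_ge0 //; lra.
apply: IH; first by rewrite size_map.
by rewrite all_map; apply/allP => q /(allP l_gt0).
Qed.

End CauchyForm.

Section CauchyTensor.
Variables (R : realFieldType) (n : nat) (c : 'I_n -> R).
Hypothesis c_gt0 : forall j, 0 < c j.

Lemma cauchy_sum_even_ge0 (h : nat) (d : R) (x : 'I_n -> R) :
  (0 < h)%N -> 0 <= d ->
  0 <= \sum_(t : (h + h).-tuple 'I_n)
          (d + \sum_(j <- t) c j)^-1 * \prod_(j <- t) x j.
Proof.
move=> h_gt0 d_ge0.
rewrite (sum_tuple_cat h h (fun t => (d + \sum_(j <- t) c j)^-1 * \prod_(j <- t) x j)).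
pose point (s : h.-tuple 'I_n) := (d / 2 + \sum_(j <- s) c j, \prod_(j <- s) x j).
have -> : \sum_(s : h.-tuple 'I_n) \sum_(u : h.-tuple 'I_n)
    (d + \sum_(j <- s ++ u) c j)^-1 * \prod_(j <- s ++ u) x j =
    cauchy_form (map point (enum {: h.-tuple 'I_n})).
  rewrite /cauchy_form big_map big_enum; apply: eq_bigr => s _.
  rewrite big_map big_enum; apply: eq_bigr => u _.
  by rewrite /= !big_cat /= addrACA -splitr mulrC.
apply: cauchy_form_ge0; rewrite all_map; apply/allP => -[[|j s] /= /eqP size_s] _ /=.
  by rewrite -size_s in h_gt0.
rewrite big_cons; have := c_gt0 j.
have : 0 <= \sum_(k <- s) c k by apply: sumr_ge0 => k _; apply: ltW.
lra.
Qed.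

Lemma cauchy_tensor_apply (m : nat) (x : 'cV[R]_n) (i : 'I_n) :
  tensor_apply m.+1 (cauchy_tensor c) x i =
  \sum_(t : m.-tuple 'I_n) (c i + \sum_(j <- t) c j)^-1 * \prod_(j <- t) x j 0.
Proof. by apply: eq_bigr => t _; rewrite /cauchy_tensor big_cons. Qed.

Lemma sum_mul_tensor_apply (m : nat) (A : seq 'I_n -> R) (x : 'cV[R]_n) :
  \sum_i x i 0 * tensor_apply m.+1 A x i =
  \sum_(t : m.+1.-tuple 'I_n) A t * \prod_(j <- t) x j 0.
Proof.
rewrite (sum_tuple_cons m (fun t => A t * \prod_(j <- t) x j 0)).
apply: eq_bigr => i _.
rewrite /tensor_apply mulr_sumr; apply: eq_bigr => t _.
by rewrite big_cons mulrCA.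
Qed.

Lemma col_neq0_coord (x : 'cV[R]_n) : x != 0 -> exists i, x i 0 != 0.
Proof.
move=> x_neq0; apply/existsP; apply: contraR x_neq0 => /existsPn x0.
by apply/eqP/matrixP => i j; rewrite (ord1 j) mxE; apply/eqP/negbNE.
Qed.

Lemma cauchy_H_eigenvalue_odd_ge0 (h : nat) (lam : R) :
  (0 < h)%N -> H_eigenvalue (h + h).+1 (cauchy_tensor c) lam -> 0 <= lam.
Proof.
move=> h_gt0 [x [/col_neq0_coord[i xi_neq0] eig]].
have := cauchy_sum_even_ge0 (fun j => x j 0) h_gt0 (ltW (c_gt0 i)).
rewrite -cauchy_tensor_apply eig /=.
by rewrite pmulr_lge0 // exprn_even_gt0 ?xi_neq0 ?orbT // addnn odd_double.
Qed.

Lemma cauchy_H_eigenvalue_even_ge0 (h : nat) (lam : R) :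
  (0 < h)%N -> H_eigenvalue (h + h) (cauchy_tensor c) lam -> 0 <= lam.
Proof.
move=> h_gt0 [x [/col_neq0_coord[i xi_neq0] eig]].
have := cauchy_sum_even_ge0 (fun j => x j 0) h_gt0 (lexx 0).
under eq_bigr do rewrite add0r.
case: h h_gt0 eig => // h _ eig.
rewrite -(sum_mul_tensor_apply (h + h.+1) (cauchy_tensor c)).
under eq_bigr do rewrite eig mulrCA -exprS.
have m_even : ~~ odd (h + h.+1).+1 by rewrite -addSn addnn odd_double.
rewrite -mulr_sumr pmulr_lge0 // (bigD1 i) //= ltr_wpDr //.
  by apply: sumr_ge0 => k _; rewrite exprn_even_ge0.
by rewrite exprn_even_gt0 // xi_neq0 orbT.
Qed.

End CauchyTensor.

Theorem theorem3p3 (R : realFieldType) (m n : nat) (c : 'I_n -> R)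
  (hm : (2 <= m)%N) (hn : (2 <= n)%N)
  (hc_nonzero : forall s : m.-tuple 'I_n, \sum_(j <- tval s) c j != 0)
  (hc_nonneg : forall i : 'I_n, 0 <= c i) :
  forall lam : R, H_eigenvalue m (cauchy_tensor c) lam -> 0 <= lam.
Proof.
have c_gt0 j : 0 < c j.
  rewrite lt_def hc_nonneg andbT.
  apply: contra_neq (hc_nonzero (nseq_tuple m j)) => cj0.
  by rewrite big_nseq iter_addr_0 cj0 mul0rn.
move=> lam; rewrite -(odd_double_half m) -addnn.
have h_gt0 : (0 < m./2)%N by rewrite half_gt0.
case: (odd m).
- exact: cauchy_H_eigenvalue_odd_ge0.
- exact: cauchy_H_eigenvalue_even_ge0.
Qed.
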